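(* Fix a point $(\xi^1,\xi^2)$ with a symmetric positive definite matrix $g_{\alpha\beta}$ ($\alpha,\beta\in\{1,2\}$), $g=\det(g_{\alpha\beta})$, inverse $g^{\alpha\beta}$. Let $P=P(\rho,e)$ be a smooth pressure law and consider the state vector $U=(\rho,v^1,v^2,V^3,e)^T$ with $\rho>0$, $E=e+\tfrac12\left(g_{\alpha\beta}v^\alpha v^\beta+(V^3)^2\right)$ and $q_c^2=g_{\alpha\beta}v^\alpha v^\beta$. For $\alpha=1,2$ let $A^\alpha$ be the $5\times5$ Jacobian matrix with respect to $U$ (with $g_{\alpha\beta}$ held fixed) of the flux $$F^\alpha(U)=\Big(\rho\sqrt g\,v^\alpha,\ \sqrt g[\rho v^1v^\alpha+g^{1\alpha}P],\ \sqrt g[\rho v^2v^\alpha+g^{2\alpha}P],\ \rho\sqrt g\,V^3v^\alpha,\ \sqrt g[\rho E+P]v^\alpha\Big)^T.$$ Assume $PP_e+\rho^2P_\rho>0$ and let $c=\frac{\sqrt{PP_e+\rho^2P_\rho}}{\rho}$. At a state where $A^1$ is invertible, the eigenvalues of $\bar A=(A^1)^{-1}A^2$ are $$\frac{v^2}{v^1},\ \frac{v^2}{v^1},\ \frac{v^2}{v^1},\ \frac{v^1v^2-c^2g^{12}\mp\frac{c}{\sqrt g}\sqrt{q_c^2-c^2}}{(v^1)^2-g^{11}c^2}.$$ Consequently the system $A^1U_{\xi^1}+A^2U_{\xi^2}+S=0$ (treating $\xi^1$ as time-like) is never strictly hyperbolic; it is (non-strictly) hyperbolic where $q_c>c$ and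 elliptic where $q_c<c$.
   Context: For a first-order system $U_t+\sum_i\bar A^iU_{x^i}+\bar S=0$, it is called strictly hyperbolic if for every unit vector $w$ the eigenvalues of $\sum_i w_i\bar A^i$ are real and distinct, non-strictly hyperbolic if they are all real but not all distinct, and elliptic if some eigenvalue is complex (non-real). For the steady system $A^1U_{\xi^1}+A^2U_{\xi^2}+S=0$, $\xi^1$ is treated as the time-like variable, so the relevant matrix is $\bar A=(A^1)^{-1}A^2$. $P_\rho,P_e$ denote partial derivatives of the pressure law. These are the steady conical Euler equations projected on the unit sphere, with $v^\alpha$ rescaled crossflow velocity components and $V^3$ the radial velocity. *)

From HB Require Import structures.
From mathcomp Require Import all_boot all_order all_algebra.
From mathcomp Require Import all_classical all_reals.
From mathcomp Require Import topology normedtype derive.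
From mathcomp Require Import complex.

Set Implicit Arguments.
Unset Strict Implicit.
Unset Printing Implicit Defensive.

Import Order.TTheory GRing.Theory Num.Theory.
Import numFieldNormedType.Exports.
Local Open Scope ring_scope.
Local Open Scope complex_scope.

Section ConicalEuler.
Variable R : realType.

Definition sym_posdef (G : 'M[R]_2) : Prop :=
  G^T = G /\ forall x : 'rV[R]_2, x != 0 -> 0 < (x *m G *m x^T) 0 0.

Definition pt (r e : R) : 'rV[R]_2 := \row_(k < 2) (if k == ord0 then r else e).

Definition P_rho (P : 'rV[R]_2 -> R) (r e : R) : R := 'D_(delta_mx 0 0) P (pt r e).
Definition P_e (P : 'rV[R]_2 -> R) (r e : R) : R := 'D_(delta_mx 0 1) P (pt r e).

Definition rho_of (U : 'rV[R]_5) : R := U 0 (inord 0).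
Definition v_of (U : 'rV[R]_5) (a : 'I_2) : R := U 0 (inord a.+1).
Definition V3_of (U : 'rV[R]_5) : R := U 0 (inord 3).
Definition e_of (U : 'rV[R]_5) : R := U 0 (inord 4).

Definition qc2 (G : 'M[R]_2) (U : 'rV[R]_5) : R :=
  \sum_(a < 2) \sum_(b < 2) G a b * v_of U a * v_of U b.

Definition Etot (G : 'M[R]_2) (U : 'rV[R]_5) : R :=
  e_of U + 2^-1 * (qc2 G U + V3_of U ^+ 2).

Definition flux (G : 'M[R]_2) (P : 'rV[R]_2 -> R) (a : 'I_2)
    (U : 'rV[R]_5) : 'rV[R]_5 :=
  let sg := Num.sqrt (\det G) in
  let Gi := invmx G in
  let r := rho_of U in
  let p := P (pt r (e_of U)) in
  let va := v_of U a in
  \row_(i < 5)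
    [:: r * sg * va;
        sg * (r * v_of U 0 * va + Gi 0 a * p);
        sg * (r * v_of U 1 * va + Gi 1 a * p);
        r * sg * V3_of U * va;
        sg * (r * Etot G U + p) * va]`_i.

(* A^alpha : the usual 5x5 Jacobian matrix (entry (i,j) = dF_i/dU_j).
   MathComp-Analysis' [jacobian] uses the row-vector convention
   ('D_v f a = v *m jacobian f a), hence the transpose. *)
Definition Amat (G : 'M[R]_2) (P : 'rV[R]_2 -> R) (a : 'I_2) (U : 'rV[R]_5)
  : 'M[R]_5 := (jacobian (flux G P a) U)^T.

Definition Abar (G : 'M[R]_2) (P : 'rV[R]_2 -> R) (U : 'rV[R]_5) : 'M[R]_5 :=
  invmx (Amat G P 0 U) *m Amat G P 1 U.

Definition sound_speed (P : 'rV[R]_2 -> R) (U : 'rV[R]_5) : R :=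
  let r := rho_of U in let e := e_of U in
  Num.sqrt (P (pt r e) * P_e P r e + r ^+ 2 * P_rho P r e) / r.

Definition cmx n (M : 'M[R]_n) : 'M[R[i]]_n := map_mx (fun x => x%:C) M.
Definition is_eigenvalue n (M : 'M[R]_n) (z : R[i]) : Prop :=
  root (char_poly (cmx M)) z.

(* Hyperbolicity of a 1-d (time-like xi^1) first-order system with matrix M:
   w ranges over unit vectors of R^1, i.e. w = +-1. *)
Definition all_eig_real n (M : 'M[R]_n) : Prop :=
  forall z, is_eigenvalue M z -> Im z = 0.
Definition eig_distinct n (M : 'M[R]_n) : Prop :=
  forall z, is_eigenvalue M z -> ~~ ((('X - z%:P) ^+ 2) %| char_poly (cmx M)).

Definition strictly_hyperbolic n (M : 'M[R]_n) : Prop :=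
  forall w : R, `|w| = 1 -> all_eig_real (w *: M) /\ eig_distinct (w *: M).
Definition nonstrictly_hyperbolic n (M : 'M[R]_n) : Prop :=
  forall w : R, `|w| = 1 -> all_eig_real (w *: M) /\ ~ eig_distinct (w *: M).
Definition elliptic n (M : 'M[R]_n) : Prop :=
  exists w : R, `|w| = 1 /\ exists z, is_eigenvalue (w *: M) z /\ Im z != 0.

End ConicalEuler.

From HB Require Import structures.
From mathcomp Require Import all_boot all_order all_algebra.
From mathcomp Require Import all_classical all_reals.
From mathcomp Require Import topology normedtype derive.
From mathcomp Require Import complex.
From mathcomp Require Import ring lra.

(* In primitive variables the flux Jacobians factor as A^a = sqrt g (dq/dU) B^a,
   where q = (rho, rho v^1, rho v^2, rho V^3, rho E) are the conserved
   quantities, so Abar = (B^1)^-1 B^2 and det B^1 * char_poly Abar is the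
   determinant of the pencil X B^1 - B^2.  That pencil has the sparse acoustic
   shape whose determinant is d^3 (d^2 - c^2 s g^-1 s^T) with d = X v^1 - v^2
   and s = (X, -1): the convective factor d gives the triple eigenvalue
   v^2 / v^1 (so the system is never strictly hyperbolic), and the acoustic
   quadratic has discriminant c^2 (q_c^2 - c^2) / g, so its roots are real iff
   q_c >= c.  Scaling Abar by w scales the pencil's second matrix, hence all
   eigenvalues, by w. *)

Set Implicit Arguments.
Unset Strict Implicit.
Unset Printing Implicit Defensive.

Import Order.TTheory GRing.Theory Num.Theory.
Import numFieldNormedType.Exports.
Local Open Scope ring_scope.
Local Open Scope complex_scope.

Lemma det_mx2 (K : comPzRingType) (A : 'M[K]_2) : \det A = A 0 0 * A 1 1 - A 0 1 * A 1 0.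
Proof.
rewrite (expand_det_row _ 0) /cofactor !big_ord_recr big_ord0 /= !det_mx11 !mxE /=.
rewrite expr0 expr1 mul1r mulN1r add0r mulrN.
by congr (A _ _ * A _ _ - A _ _ * A _ _); apply: val_inj.
Qed.

Lemma invmx_mulmx_cancel (K : comUnitRingType) n (S A B : 'M[K]_n) :
  S *m A \in unitmx -> invmx (S *m A) *m (S *m B) = invmx A *m B.
Proof.
move=> uSA; have /andP[_ uA] : (S \in unitmx) && (A \in unitmx) by rewrite -unitmx_mul.
by rewrite -{2}(mulmxK uA S) -(mulmxA (S *m A)) mulKmx.
Qed.

Lemma char_poly_invmx_mulmx (K : comUnitRingType) n (A B : 'M[K]_n) : A \in unitmx ->
  (\det A)%:P * char_poly (invmx A *m B) = \det ('X *: map_mx polyC A - map_mx polyC B).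
Proof.
move=> uA; rewrite -det_map_mx /char_poly -det_mulmx /char_poly_mx mulmxBr mul_mx_scalar.
by rewrite map_mxM mulmxA -map_mxM mulmxV // map_mx1 mul1mx.
Qed.

Lemma quadratic_factor (K : fieldType) (a b c r : K) :
  a != 0 -> b ^+ 2 - a * c = r ^+ 2 ->
  a%:P * 'X ^+ 2 - (2 * b)%:P * 'X + c%:P
    = a%:P * ('X - ((b - r) / a)%:P) * ('X - ((b + r) / a)%:P).
Proof.
move=> a0 disc.
have sum_roots : a * ((b - r) / a + (b + r) / a) = 2 * b by field.
have prod_roots : a * ((b - r) / a * ((b + r) / a)) = c.
  have -> : c = (b ^+ 2 - r ^+ 2) / a by rewrite -disc; field.
  by field.
rewrite -sum_roots -prod_roots; ring.
Qed.

Lemma sum_ord2 (V : nmodType) (F : 'I_2 -> V) : \sum_(i < 2) F i = F 0 + F 1.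
Proof. by rewrite big_ord_recr big_ord1; congr (F _ + F _); apply: val_inj. Qed.

Lemma invmx_mx2 (K : fieldType) (A : 'M[K]_2) : \det A != 0 ->
  [/\ invmx A 0 0 = A 1 1 / \det A, invmx A 0 1 = - A 0 1 / \det A,
      invmx A 1 0 = - A 1 0 / \det A & invmx A 1 1 = A 0 0 / \det A].
Proof.
move=> dA; rewrite /invmx unitmxE unitfE dA !mxE /cofactor !det_mx11 !mxE /=.
rewrite !expr0 expr1 expr2 !mul1r mulN1r mulrNN mul1r.
by split; rewrite ?mul1r ?mulN1r mulrC; repeat f_equal; apply: val_inj.
Qed.

Lemma quad_form_mx2 (K : comPzRingType) (G : 'M[K]_2) (x : 'rV[K]_2) :
  (x *m G *m x^T) 0 0
    = x 0 0 ^+ 2 * G 0 0 + x 0 0 * x 0 1 * (G 0 1 + G 1 0) + x 0 1 ^+ 2 * G 1 1.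
Proof. by rewrite !mxE !sum_ord2 !mxE !sum_ord2; ring. Qed.

Lemma sym_posdef_det_gt0 (R : realType) (G : 'M[R]_2) : sym_posdef G -> 0 < \det G.
Proof.
case=> /matrixP /(_ 0 1); rewrite mxE => G10 pos.
have G00 : 0 < G 0 0.
  have e0_neq0 : \row_j (j == 0 :> 'I_2)%:R != 0 :> 'rV[R]_2.
    by apply/eqP => /matrixP /(_ 0 0); rewrite !mxE => /eqP; rewrite oner_eq0.
  by have := pos _ e0_neq0; rewrite quad_form_mx2 !mxE /=; lra.
have x_neq0 : \row_j (if j == 0 then G 0 1 else - G 0 0) != 0 :> 'rV[R]_2.
  by apply/eqP => /matrixP /(_ 0 1); rewrite !mxE /= => /eqP; rewrite oppr_eq0 gt_eqF.
rewrite det_mx2 G10 -(pmulr_rgt0 _ G00).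
by have := pos _ x_neq0; rewrite quad_form_mx2 !mxE /= G10; lra.
Qed.

Lemma real_complex_real (R : rcfType) (x : R) : x%:C \is Num.real.
Proof. by rewrite realE !lecE /= eqxx /= le_total. Qed.

Lemma sqrtC_real_ge0 (C : numClosedFieldType) (z : C) : sqrtC z \is Num.real -> 0 <= z.
Proof. by move=> /(@real_exprn_even_ge0 _ 2) /(_ isT); rewrite sqrtCK. Qed.

Section AcousticMatrix.
Variable K : comPzRingType.

(* The primitive-variable matrix B^a is [acoustic_mx] with s = e_a and t the
   a-th column of g^-1; the determinant only sees the pairing s t^T. *)
Definition acoustic_mx (d r q kr ke s0 s1 t0 t1 : K) : 'M[K]_5 :=
  \matrix_(i, j) nth 0 (nth [::]
    [:: [:: d;       r * s0; r * s1; 0; 0      ];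
        [:: kr * t0; d;      0;      0; ke * t0];
        [:: kr * t1; 0;      d;      0; ke * t1];
        [:: 0;       0;      0;      d; 0      ];
        [:: 0;       q * s0; q * s1; 0; d      ]] i) j.

Lemma det_acoustic_mx d r q kr ke s0 s1 t0 t1 :
  \det (acoustic_mx d r q kr ke s0 s1 t0 t1)
    = d ^+ 3 * (d ^+ 2 - (r * kr + q * ke) * (s0 * t0 + s1 * t1)).
Proof.
repeat rewrite (expand_det_row _ ord0) /cofactor !big_ord_recr big_ord0 /= !mxE /=
  ?mul0r ?add0r ?addr0.
by rewrite !det_mx00; ring.
Qed.
End AcousticMatrix.

Section Differentiation.
Variable R : realType.

Lemma is_derive_coord m n (x v : 'M[R]_(m, n)) i j :
  is_derive x v (fun N : 'M[R]_(m, n) => N i j) (v i j).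
Proof.
have @f : {linear 'M[R]_(m, n) -> R}.
  by exists (fun N : 'M[R]_(m, n) => N i j); do 2![eexists]; do ?[constructor];
     rewrite ?mxE// => ? *; rewrite ?mxE//; move=> ?; rewrite !mxE.
rewrite (_ : (fun _ => _) = f) //.
have cf : continuous f by exact: coord_continuous.
apply: DeriveDef; first exact/diff_derivable/linear_differentiable.
by rewrite deriveE ?diff_lin //; exact: linear_differentiable.
Qed.

(* [is_deriveM] with the derivative written with [*] instead of [*:], which
   [field] cannot read. *)
Lemma is_derive_mul (V : normedModType R) (f g : V -> R) x v df dg :
  is_derive x v f df -> is_derive x v g dg ->
  is_derive x v (fun y => f y * g y) (f x * dg + g x * df).
Proof. exact: is_deriveM. Qed.

Lemma differentiable_rV n m (f : 'rV[R]_n -> 'rV[R]_m) x :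
  (forall j, differentiable (fun y => f y 0 j) x) -> differentiable f x.
Proof.
move=> df; rewrite (_ : f = \sum_j (fun y => f y 0 j *: delta_mx 0 j)).
  by apply: differentiable_sum => j; apply: differentiableZl.
by apply/funext => y; rewrite fct_sumE [LHS]row_sum_delta.
Qed.

Lemma jacobian_coord n m (f : 'rV[R]_n -> 'rV[R]_m) x i j : differentiable f x ->
  jacobian f x i j = 'D_(delta_mx 0 i) (fun y => f y 0 j) x.
Proof.
move=> df; have dcoord := differentiable_coord (f x) 0 j.
have dcomp : differentiable ((fun z : 'rV_m => z 0 j) \o f) x.
  exact: differentiable_comp.
rewrite mxE [RHS](deriveE _ dcomp) (diff_comp df dcoord) /=.
by rewrite -(deriveE _ dcoord) (@derive_val _ _ _ _ _ _ _ (is_derive_coord _ _ _ _)).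
Qed.
End Differentiation.

Section Pressure.
Variables (R : realType) (P : 'rV[R]_2 -> R).
Hypothesis dP : forall x, differentiable P x.

Lemma ptE (r e : R) : pt r e = r *: delta_mx 0 0 + e *: delta_mx 0 1.
Proof.
apply/matrixP => i j; rewrite !mxE ord1 /=.
by case: j => [[|[|//]] ?] /=; rewrite ?mulr1 ?mulr0 ?addr0 ?add0r.
Qed.

Let thermo_state (y : 'rV[R]_5) := pt (rho_of y) (e_of y).

Lemma differentiable_thermo_state x : differentiable thermo_state x.
Proof.
rewrite /thermo_state (_ : (fun y => _)
  = fun y => rho_of y *: delta_mx 0 0 + e_of y *: delta_mx 0 1).
  by apply: differentiableD; apply: differentiableZl; apply: differentiable_coord.
by apply/funext => y; rewrite ptE.
Qed.

Lemma thermo_state_linear : linear thermo_state.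
Proof.
move=> k y z; rewrite /thermo_state !ptE /rho_of /e_of !mxE.
by rewrite !scalerDl scalerDr !scalerA addrACA.
Qed.

Lemma diff_thermo_state x : 'd thermo_state x = thermo_state :> (_ -> _).
Proof.
pose L : {linear _ -> _} :=
  HB.pack thermo_state (GRing.isLinear.Build _ _ _ _ _ thermo_state_linear).
have cL : continuous L.
  by move=> y; apply/differentiable_continuous/differentiable_thermo_state.
exact: (diff_lin x cL).
Qed.

Lemma differentiable_pressure x : differentiable (fun y => P (pt (rho_of y) (e_of y))) x.
Proof. exact: (differentiable_comp (differentiable_thermo_state x)). Qed.

Lemma is_derive_pressure x v :
  is_derive x v (fun y => P (pt (rho_of y) (e_of y)))
    (rho_of v * P_rho P (rho_of x) (e_of x) + e_of v * P_e P (rho_of x) (e_of x)).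
Proof.
apply: DeriveDef; first exact/diff_derivable/differentiable_pressure.
rewrite (deriveE _ (differentiable_pressure x)).
rewrite (diff_comp (differentiable_thermo_state x) (dP _)) /= diff_thermo_state.
have -> : thermo_state v = rho_of v *: delta_mx 0 0 + e_of v *: delta_mx 0 1 by exact: ptE.
by rewrite linearD !linearZ /P_rho /P_e !deriveE.
Qed.
End Pressure.

Section Flux.
Variables (R : realType) (G : 'M[R]_2) (P : 'rV[R]_2 -> R).
Hypothesis dP : forall x, differentiable P x.

Local Notation sg := (Num.sqrt (\det G)).
Local Notation pressure y := (P (pt (rho_of y) (e_of y))).

Definition flux_entry (a : 'I_2) (i : nat) (y : 'rV[R]_5) : R :=
  match i with
  | 0 => rho_of y * sg * v_of y a
  | 1 => sg * (rho_of y * v_of y 0 * v_of y a + invmx G 0 a * pressure y)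
  | 2 => sg * (rho_of y * v_of y 1 * v_of y a + invmx G 1 a * pressure y)
  | 3 => rho_of y * sg * V3_of y * v_of y a
  | _ => sg * (rho_of y * (e_of y + 2^-1 * (G 0 0 * v_of y 0 * v_of y 0
           + G 0 1 * v_of y 0 * v_of y 1 + G 1 0 * v_of y 1 * v_of y 0
           + G 1 1 * v_of y 1 * v_of y 1 + V3_of y * V3_of y)) + pressure y) * v_of y a
  end.

Lemma qc2E (y : 'rV[R]_5) : qc2 G y = G 0 0 * v_of y 0 * v_of y 0
  + G 0 1 * v_of y 0 * v_of y 1 + G 1 0 * v_of y 1 * v_of y 0 + G 1 1 * v_of y 1 * v_of y 1.
Proof. by rewrite /qc2 !sum_ord2 addrA. Qed.

Lemma flux_entryE a (i : 'I_5) : (fun y => flux G P a y 0 i) = flux_entry a i.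
Proof.
apply/funext => y; rewrite mxE /Etot qc2E expr2.
by case: i => [[|[|[|[|[|//]]]]] ?].
Qed.

Lemma differentiable_flux a x : differentiable (flux G P a) x.
Proof.
apply: differentiable_rV => i; rewrite flux_entryE.
case: i => [[|[|[|[|[|//]]]]] ?] /=;
  by repeat first [ apply: differentiable_pressure | apply: differentiable_coord
                  | apply: differentiableM | apply: differentiableD
                  | apply: differentiable_cst ].
Qed.
End Flux.

Section ConicalEuler.
Variables (R : realType) (G : 'M[R]_2) (P : 'rV[R]_2 -> R) (U : 'rV[R]_5).

Local Notation r := (rho_of U).
Local Notation v1 := (v_of U 0).
Local Notation v2 := (v_of U 1).
Local Notation p := (P (pt (rho_of U) (e_of U))).
Local Notation pr := (P_rho P (rho_of U) (e_of U)).
Local Notation pe := (P_e P (rho_of U) (e_of U)).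

(* dq/dU for the conserved quantities q = (rho, rho v^1, rho v^2, rho V^3, rho E). *)
Definition cons_jacobian : 'M[R]_5 :=
  \matrix_(i, j) nth 0 (nth [::]
    [:: [:: 1;  0; 0; 0; 0];
        [:: v1; r; 0; 0; 0];
        [:: v2; 0; r; 0; 0];
        [:: V3_of U; 0; 0; r; 0];
        [:: Etot G U; r * (G 0 0 * v1 + G 0 1 * v2); r * (G 1 0 * v1 + G 1 1 * v2);
            r * V3_of U; r]] i) j.

Definition primitive_mx (a : 'I_2) : 'M[R]_5 :=
  acoustic_mx (v_of U a) r (p / r) (pr / r) (pe / r)
    (a == 0)%:R (a == 1)%:R (invmx G 0 a) (invmx G 1 a).

Hypothesis dP : forall x, differentiable P x.

Lemma Amat_factor a : G 1 0 = G 0 1 -> \det G != 0 -> r != 0 ->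
  Amat G P a U = Num.sqrt (\det G) *: (cons_jacobian *m primitive_mx a).
Proof.
move=> G10 dG r0.
have a01 : a = 0 \/ a = 1 by case: a => [[|[|//]] ?]; [left|right]; apply: val_inj.
have [Gi00 Gi01 Gi10 Gi11] := invmx_mx2 dG.
have dG2 : G 0 0 * G 1 1 - G 0 1 * G 0 1 != 0 by rewrite -[X in _ - _ * X]G10 -det_mx2.
rewrite det_mx2 G10 in Gi00 Gi01 Gi10 Gi11.
have r0' : U 0 (inord 0) != 0 := r0.
apply/matrixP => i j; rewrite /Amat [LHS]mxE jacobian_coord ?flux_entryE; last first.
  exact: differentiable_flux.
rewrite !mxE !big_ord_recr big_ord0 /= !mxE /=.
case: i => [[|[|[|[|[|//]]]]] ?]; rewrite /flux_entry /=;
  apply: derive_val; (eapply is_derive_eq;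
  [repeat first [ apply: is_derive_pressure | apply: is_derive_coord
                | apply: is_derive_mul | apply: is_deriveD | apply: is_derive_cst ] | ]).
all: case: j => [[|[|[|[|[|//]]]]] ?] /=.
all: case: a01 => a_val; rewrite ?a_val.
all: rewrite /Etot ?qc2E /rho_of /v_of /V3_of /e_of ?mxE -?val_eqE /= ?inordK //=.
all: rewrite ?modn_small // ?Gi00 ?Gi01 ?Gi10 ?Gi11 ?G10 ?expr2.
all: by field; rewrite ?r0' ?dG2.
Qed.

Local Notation c := (sound_speed P U).
Local Notation Gi := (invmx G).
Local Notation num := (v1 * v2 - c ^+ 2 * Gi 0 1).
Local Notation den := (v1 ^+ 2 - Gi 0 0 * c ^+ 2).
Local Notation C22 := (v2 ^+ 2 - Gi 1 1 * c ^+ 2).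

Hypothesis spdG : sym_posdef G.
Hypothesis rho_gt0 : 0 < r.
Hypothesis K_gt0 : 0 < p * pe + r ^+ 2 * pr.
Hypothesis A0_unit : Amat G P 0 U \in unitmx.

Let G10 : G 1 0 = G 0 1.
Proof. by case: spdG => /matrixP /(_ 0 1); rewrite mxE. Qed.

Let detG_neq0 : \det G != 0.
Proof. by rewrite gt_eqF // sym_posdef_det_gt0. Qed.

Let r_neq0 : r != 0.
Proof. by rewrite gt_eqF. Qed.

Lemma invmx_metric_sym : Gi 1 0 = Gi 0 1.
Proof. by have [_ -> -> _] := invmx_mx2 detG_neq0; rewrite G10. Qed.

Lemma sound_speed_gt0 : 0 < c.
Proof. by rewrite divr_gt0 // sqrtr_gt0. Qed.

Lemma sound_speed_sqr : c ^+ 2 = r * (pr / r) + p / r * (pe / r).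
Proof. by rewrite expr_div_n sqr_sqrtr ?ltW //; field. Qed.

Lemma Abar_primitive : Abar G P U = invmx (primitive_mx 0) *m primitive_mx 1
                  /\ primitive_mx 0 \in unitmx.
Proof.
move: A0_unit; rewrite /Abar !Amat_factor // !scalemxAl => A0u.
split; first exact: invmx_mulmx_cancel.
by move: A0u; rewrite unitmx_mul => /andP[].
Qed.

Lemma det_primitive_mx0 : \det (primitive_mx 0) = v1 ^+ 3 * den.
Proof. by rewrite det_acoustic_mx -sound_speed_sqr /=; ring. Qed.

Lemma v1_den_neq0 : v1 != 0 /\ den != 0.
Proof.
have := Abar_primitive.2; rewrite unitmxE unitfE det_primitive_mx0 mulf_eq0 expf_eq0 /=.
by rewrite negb_or => /andP[].
Qed.

Lemma char_poly_scaled_Abar_pencil w :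
  ((v1 ^+ 3 * den)%:C)%:P * char_poly (cmx (w *: Abar G P U))
  = ('X * (v1%:C)%:P - ((w * v2)%:C)%:P) ^+ 3
    * ((den%:C)%:P * 'X ^+ 2 - (2 * (w * num)%:C)%:P * 'X + ((w ^+ 2 * C22)%:C)%:P).
Proof.
have [-> B0u] := Abar_primitive.
rewrite -det_primitive_mx0 -(det_map_mx (real_complex R)) /cmx scalemxAr map_mxM map_invmx.
rewrite char_poly_invmx_mulmx ?map_unitmx //.
have -> : 'X *: map_mx polyC (map_mx (real_complex R) (primitive_mx 0))
          - map_mx polyC (map_mx (real_complex R) (w *: primitive_mx 1))
   = acoustic_mx ('X * (v1%:C)%:P - ((w * v2)%:C)%:P) (r%:C)%:P ((p / r)%:C)%:P
       ((pr / r)%:C)%:P ((pe / r)%:C)%:P 'X (- (w%:C)%:P)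
       ('X * ((Gi 0 0)%:C)%:P - ((w * Gi 0 1)%:C)%:P)
       ('X * ((Gi 1 0)%:C)%:P - ((w * Gi 1 1)%:C)%:P).
  apply/matrixP => i j; rewrite !mxE.
  by case: i => [[|[|[|[|[|//]]]]] ?]; case: j => [[|[|[|[|[|//]]]]] ?] /=; ring.
have c2 : (r%:C)%:P * ((pr / r)%:C)%:P + ((p / r)%:C)%:P * ((pe / r)%:C)%:P
          = ((c ^+ 2)%:C)%:P :> {poly R[i]}.
  by rewrite sound_speed_sqr; ring.
rewrite det_acoustic_mx c2 invmx_metric_sym.
ring.
Qed.

Lemma acoustic_discriminant :
  num ^+ 2 - den * C22 = c ^+ 2 / \det G * (qc2 G U - c ^+ 2).
Proof.
have [Gi00 Gi01 _ Gi11] := invmx_mx2 detG_neq0.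
have dG : G 0 0 * G 1 1 - G 0 1 * G 0 1 != 0 by rewrite -[X in _ - _ * X]G10 -det_mx2.
by rewrite Gi00 Gi01 Gi11 qc2E det_mx2 G10; field.
Qed.

Local Notation lam0 := ((v2 / v1)%:C : R[i]).
Local Notation rt := ((c / Num.sqrt (\det G))%:C * sqrtC ((qc2 G U - c ^+ 2)%:C) : R[i]).
Local Notation lamm := ((num%:C - rt) / den%:C).
Local Notation lamp := ((num%:C + rt) / den%:C).

Lemma radical_sqr : rt ^+ 2 = (c ^+ 2 / \det G * (qc2 G U - c ^+ 2))%:C.
Proof.
rewrite exprMn sqrtCK -rmorphXn expr_div_n sqr_sqrtr -?rmorphM //.
exact/ltW/sym_posdef_det_gt0.
Qed.

Lemma char_poly_scaled_Abar w : char_poly (cmx (w *: Abar G P U))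
  = ('X - (w%:C * lam0)%:P) ^+ 3 * ('X - (w%:C * lamm)%:P) * ('X - (w%:C * lamp)%:P).
Proof.
have [v1_neq0 den_neq0] := v1_den_neq0.
have denC_neq0 : den%:C != 0 :> R[i] by rewrite fmorph_eq0.
apply: (@mulfI _ ((v1 ^+ 3 * den)%:C)%:P).
  by rewrite polyC_eq0 fmorph_eq0 mulf_neq0 ?expf_neq0.
rewrite char_poly_scaled_Abar_pencil.
have disc : (w * num)%:C ^+ 2 - den%:C * (w ^+ 2 * C22)%:C = (w%:C * rt) ^+ 2.
  by rewrite (exprMn _ w%:C) radical_sqr -acoustic_discriminant; ring.
have := quadratic_factor denC_neq0 disc.
have -> : ((w * num)%:C - w%:C * rt) / den%:C = w%:C * lamm by rewrite rmorphM; ring.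
have -> : ((w * num)%:C + w%:C * rt) / den%:C = w%:C * lamp by rewrite rmorphM; ring.
move=> quad.
have lin : (v1%:C)%:P * ('X - (w%:C * lam0)%:P) = 'X * (v1%:C)%:P - ((w * v2)%:C)%:P.
  rewrite mulrBr mulrC -polyCM; congr (_ - _%:P).
  by rewrite -!rmorphM; congr (_%:C); field.
transitivity (((v1%:C)%:P * ('X - (w%:C * lam0)%:P)) ^+ 3
   * ((den%:C)%:P * ('X - (w%:C * lamm)%:P) * ('X - (w%:C * lamp)%:P))); last first.
  by ring.
by rewrite -quad lin.
Qed.

Lemma eigenvalue_scaled_Abar w z : is_eigenvalue (w *: Abar G P U) z ->
  [\/ z = w%:C * lam0, z = w%:C * lamm | z = w%:C * lamp].
Proof.
rewrite /is_eigenvalue char_poly_scaled_Abar rootM rootM root_exp_XsubC !root_XsubC /=.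
by case/orP => [/orP[]|] /eqP ->; [apply: Or31 | apply: Or32 | apply: Or33].
Qed.

Lemma scaled_Abar_not_eig_distinct w : ~ eig_distinct (w *: Abar G P U).
Proof.
move/(_ (w%:C * lam0)); rewrite /is_eigenvalue char_poly_scaled_Abar.
rewrite rootM rootM root_exp_XsubC eqxx /= => /(_ isT) /negP; apply.
by apply: dvdp_mulr; apply: dvdp_mulr; apply: dvdp_exp2l.
Qed.

Let sqrtC_real_complex (x : R) : 0 <= x -> sqrtC (x%:C) \is Num.real.
Proof. by move=> x_ge0; apply: sqrtC_real; rewrite lecE /= eqxx. Qed.

Lemma scaled_Abar_all_eig_real w :
  c < Num.sqrt (qc2 G U) -> all_eig_real (w *: Abar G P U).
Proof.
move=> c_lt_qc.
have c_gt0 := sound_speed_gt0.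
have q_gt0 : 0 < qc2 G U by rewrite -sqrtr_gt0 (lt_trans c_gt0).
have radicand_ge0 : 0 <= qc2 G U - c ^+ 2.
  by have := sqr_sqrtr (ltW q_gt0); nra.
move=> z /eigenvalue_scaled_Abar [] ->; apply/Creal_ImP;
  by repeat first [ exact: real_complex_real | exact: (sqrtC_real_complex radicand_ge0)
                  | apply: realM | apply: realD | rewrite realN | rewrite realV ].
Qed.

Lemma Im_root_plus_neq0 : Num.sqrt (qc2 G U) < c -> 'Im lamp != 0.
Proof.
move=> qc_lt_c.
have c_gt0 := sound_speed_gt0.
have [_ den_neq0] := v1_den_neq0.
have radicand_lt0 : qc2 G U - c ^+ 2 < 0.
  rewrite subr_lt0; have [q_lt0|q_ge0] := ltP (qc2 G U) 0; first by nra.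
  by have := sqr_sqrtr q_ge0; have := sqrtr_ge0 (qc2 G U); nra.
(* A real root would make the radical real, against a negative radicand. *)
apply/negP => /eqP /Creal_ImP lamp_real.
have rt_real : rt \is Num.real.
  have -> : rt = lamp * den%:C - num%:C.
    by rewrite divfK ?fmorph_eq0 // [num%:C + _]addrC addrK.
  by apply: rpredB; [apply: rpredM | ]; rewrite ?real_complex_real.
have : sqrtC ((qc2 G U - c ^+ 2)%:C) \is Num.real.
  have -> : sqrtC ((qc2 G U - c ^+ 2)%:C) = rt / (c / Num.sqrt (\det G))%:C.
    have g_gt0 := sym_posdef_det_gt0 spdG.
    by field; rewrite !fmorph_eq0 !gt_eqF ?sqrtr_gt0.
  by apply: rpredM; [ | rewrite rpredV real_complex_real].
by move/sqrtC_real_ge0; rewrite lecE /= eqxx /= leNgt radicand_lt0.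
Qed.
End ConicalEuler.

Theorem mainTheorem3 (R : realType) (G : 'M[R]_2) (P : 'rV[R]_2 -> R)
    (U : 'rV[R]_5) :
  sym_posdef G ->
  (forall x : 'rV[R]_2, differentiable P x) ->
  0 < rho_of U ->
  0 < P (pt (rho_of U) (e_of U)) * P_e P (rho_of U) (e_of U)
      + rho_of U ^+ 2 * P_rho P (rho_of U) (e_of U) ->
  Amat G P 0 U \in unitmx ->
  let c := sound_speed P U in
  let g := \det G in
  let Gi := invmx G in
  let v1 := v_of U 0 in
  let v2 := v_of U 1 in
  let qc := Num.sqrt (qc2 G U) in
  let lam0 : R[i] := (v2 / v1)%:C in
  let num : R[i] := (v1 * v2 - c ^+ 2 * Gi 0 1)%:C in
  let rt : R[i] := (c / Num.sqrt g)%:C * sqrtC ((qc2 G U - c ^+ 2)%:C) in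
  let den : R[i] := (v1 ^+ 2 - Gi 0 0 * c ^+ 2)%:C in
  let lamm : R[i] := (num - rt) / den in
  let lamp : R[i] := (num + rt) / den in
  char_poly (cmx (Abar G P U))
    = ('X - lam0%:P) ^+ 3 * ('X - lamm%:P) * ('X - lamp%:P)
  /\ ~ strictly_hyperbolic (Abar G P U)
  /\ (c < qc -> nonstrictly_hyperbolic (Abar G P U))
  /\ (qc < c -> elliptic (Abar G P U)).
Proof.
move=> spdG dP rho_gt0 K_gt0 A0_unit c g Gi v1 v2 qc lam0 num rt den lamm lamp.
have char_poly_w := char_poly_scaled_Abar dP spdG rho_gt0 K_gt0 A0_unit.
have not_distinct := scaled_Abar_not_eig_distinct dP spdG rho_gt0 K_gt0 A0_unit.
have char_poly1 : char_poly (cmx (Abar G P U))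
    = ('X - lam0%:P) ^+ 3 * ('X - lamm%:P) * ('X - lamp%:P).
  by have := char_poly_w 1; rewrite scale1r rmorph1 !mul1r.
split; first exact: char_poly1.
split; first by move/(_ 1 (normr1 _)) => [_]; apply: not_distinct.
split.
  move=> c_lt_qc w _; split; last exact: not_distinct.
  exact: scaled_Abar_all_eig_real.
move=> qc_lt_c; exists 1; split; first exact: normr1.
exists lamp; split.
  by rewrite scale1r /is_eigenvalue char_poly1 rootM root_XsubC eqxx orbT.
exact: Im_root_plus_neq0.
Qed.
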